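(* Let $s$ be a positive integer, let $\mathcal F$ be a hypergraph on a vertex set $V$, and let $i$ be an integer with $0<i<|V|$ such that $\wp(\mathcal F,i)\le\frac{|\mathcal F|}{2^s|V|^{s-1}}$. Then there are at least $i^s$ tuples $U\in V^s$ with $|\mathcal F(U)|\ge\frac{|\mathcal F|}{(2|V|)^s}$.
   Context: For a vertex set $I$, $\mathcal F[I]=\{e\in\mathcal F:e\subseteq I\}$ and $\wp(\mathcal F,i)=\max_{|I|=i}|\mathcal F[I]|$. The link of a vertex set $I$ is $\mathcal F(I)=\{e\setminus I: I\subseteq e\in\mathcal F\}$ (a hypergraph on $V\setminus I$). For a tuple $U$ of vertices (entries may repeat), $|U|$ denotes the number of distinct vertices in $U$ and $\mathcal F(U)$ is the link of the set of distinct vertices of $U$. *)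

From mathcomp Require Import all_boot.
Set Implicit Arguments. Unset Strict Implicit. Unset Printing Implicit Defensive.

(* A hypergraph on the finite vertex set V = [set: T] is a set of edges,
   each edge a subset of V. *)

Definition induced (T : finType) (F : {set {set T}}) (I : {set T}) : {set {set T}} :=
  [set e in F | e \subset I].

Definition wp (T : finType) (F : {set {set T}}) (i : nat) : nat :=
  \max_(I : {set T} | #|I| == i) #|induced F I|.

Definition link (T : finType) (F : {set {set T}}) (I : {set T}) : {set {set T}} :=
  [set e :\: I | e in [set e in F | I \subset e]].

Definition tlink (T : finType) (s : nat) (F : {set {set T}}) (U : s.-tuple T)
  : {set {set T}} := link F [set x in U].

From mathcomp Require Import all_boot zify.

Set Implicit Arguments.
Unset Strict Implicit.
Unset Printing Implicit Defensive.

(* Let n = |V|, m = |F|, and call I heavy at level k when m <= |star I| (2n)^k,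
   where star I, the set of edges containing I, is in bijection with the link
   F(I); the empty set is heavy at level 0.  If I is heavy at level k < s, then
   at least i vertices v make v |: I heavy at level k + 1.  Otherwise those
   vertices lie in some i-set J, and each edge containing I either lies in J or
   contains v |: I for some v outside J.  Scaled by (2n)^(k+1), the first kind
   counts at most wp(F, i) (2n)^s <= n m and the second fewer than n m, whereas
   I being heavy gives at least 2 n m.  Adding one entry at a time therefore
   produces i^s heavy s-tuples. *)

Lemma leq_card_bigcup (I U : finType) (A : {set I}) (G : I -> {set U}) :
  #|\bigcup_(v in A) G v| <= \sum_(v in A) #|G v|.
Proof.
elim/big_rec2: _ => [|v n X _ leXn]; first by rewrite cards0.
by rewrite (leq_trans (leq_card_setU (G v) X).1) ?leq_add2l.
Qed.

Section Hypergraph.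
Variables (T : finType) (F : {set {set T}}).

Definition star (I : {set T}) : {set {set T}} := [set e in F | I \subset e].

Definition heavy (k : nat) (I : {set T}) : bool :=
  #|F| <= #|star I| * (2 * #|T|) ^ k.

Definition heavy_tuples (k : nat) : {set k.-tuple T} :=
  [set t : k.-tuple T | heavy k [set x in t]].

Lemma card_link (I : {set T}) : #|link F I| = #|star I|.
Proof.
rewrite /link card_in_imset // => e1 e2; rewrite !inE => /andP[_ sIe1] /andP[_ sIe2] eqD.
apply/setP=> x; have [xI | xNI] := boolP (x \in I).
  by rewrite (subsetP sIe1) ?(subsetP sIe2).
by move/setP: eqD => /(_ x); rewrite !inE xNI.
Qed.

Lemma card_induced_le_wp (J : {set T}) : #|induced F J| <= wp F #|J|.
Proof. by rewrite /wp (bigD1 J) //= leq_maxl. Qed.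

Lemma card_star_le (I J : {set T}) :
  #|star I| <= #|induced F J| + \sum_(v in ~: J) #|star (v |: I)|.
Proof.
have sub_star : star I \subset induced F J :|: \bigcup_(v in ~: J) star (v |: I).
  apply/subsetP => e; rewrite !inE => /andP[eF sIe].
  have [eJ | /subsetPn[v ve vNJ]] := boolP (e \subset J); first by rewrite eF.
  rewrite andbF /=; apply/bigcupP; exists v; first by rewrite inE.
  by rewrite inE eF subUset sub1set ve sIe.
apply: (leq_trans (subset_leq_card sub_star)).
by rewrite (leq_trans (leq_card_setU _ _).1) ?leq_add2l ?leq_card_bigcup.
Qed.

End Hypergraph.

Lemma exists_superset_card (T : finType) (B : {set T}) (j : nat) :
  #|B| <= j <= #|T| -> exists2 J : {set T}, B \subset J & #|J| = j.
Proof.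
move: {2}(j - #|B|) (erefl (j - #|B|)) => d.
elim: d B => [|d IHd] B gap /andP[leBj lejT]; first by exists B => //; lia.
have: 0 < #|~: B| by rewrite cardsCs setCK; lia.
case/card_gt0P => x; rewrite inE => xNB.
have cardxB : #|x |: B| = #|B|.+1 by rewrite cardsU1 xNB.
have [J sxBJ cardJ] := IHd (x |: B) ltac:(lia) ltac:(lia).
by exists J => //; apply: subset_trans sxBJ; apply: subsetUr.
Qed.

Lemma expn2M_split (n s : nat) : 0 < s -> (2 * n) ^ s = n * (2 ^ s * n ^ (s - 1)).
Proof. by case: s => // s _; rewrite subn1 expnMn !expnS mulnCA. Qed.

Lemma card_cons_extensions (T : finType) (k c : nat)
    (A : {set k.-tuple T}) (P : {set k.+1.-tuple T}) :
  (forall t, t \in A -> c <= #|[set v | [tuple of v :: t] \in P]|) ->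
  c * #|A| <= #|P|.
Proof.
move=> extA; pose G (t : k.-tuple T) := [set v | [tuple of v :: t] \in P].
pose cons_pair (p : k.-tuple T * T) := [tuple of p.2 :: p.1].
have cons_inj : injective cons_pair.
  by move=> [t1 v1] [t2 v2] /(congr1 val) [-> /val_inj ->].
set pairs := [set p : k.-tuple T * T | (p.1 \in A) && (p.2 \in G p.1)].
have card_pairs : #|pairs| = \sum_(t in A) #|G t|.
  rewrite -sum1_card (eq_bigl _ _ (fun p => in_set _ p)) /=.
  rewrite -(pair_big_dep (mem A) (fun t => mem (G t)) (fun _ _ => 1)) /=.
  by apply: eq_bigr => t _; rewrite sum1_card.
have sub_P : cons_pair @: pairs \subset P.
  by apply/subsetP => _ /imsetP[[t v] /[!inE] /andP[_ ?] ->].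
apply: leq_trans (subset_leq_card sub_P).
by rewrite (card_imset _ cons_inj) card_pairs mulnC -sum_nat_const leq_sum.
Qed.

Section Extension.
Variables (T : finType) (F : {set {set T}}) (s i : nat).
Hypothesis lt_i_T : i < #|T|.
Hypothesis wp_small : wp F i * (2 ^ s * #|T| ^ (s - 1)) <= #|F|.

Lemma many_heavy_extensions (k : nat) (I : {set T}) :
  k < s -> heavy F k I -> i <= #|[set v | heavy F k.+1 (v |: I)]|.
Proof.
rewrite /heavy => lt_k_s heavyI.
set n := #|T|; set m := #|F|; set B := [set v | _].
have [m0 | m_gt0] := posnP m.
  by rewrite (_ : B = setT) ?cardsT 1?ltnW //; apply/setP => v; rewrite !inE m0.
rewrite leqNgt; apply/negP => ltBi.
have [J sBJ cardJ] := @exists_superset_card T B i ltac:(lia).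
set P := (2 * n) ^ k.+1.
have wpP : wp F i * P <= n * m.
  have leP : P <= (2 * n) ^ s by apply: leq_pexp2l => //; lia.
  apply: (leq_trans (leq_mul (leqnn _) leP)).
  by rewrite expn2M_split 1?mulnCA ?leq_mul2l ?wp_small ?orbT //; lia.
have outsideP : (\sum_(v in ~: J) #|star F (v |: I)|) * P <= n * (m - 1).
  rewrite big_distrl /= (@leq_trans (\sum_(v in ~: J) (m - 1))) //.
    apply: leq_sum => v; rewrite inE => vNJ.
    have: v \notin B by apply: contra vNJ; apply: subsetP.
    by rewrite inE -ltnNge -/P => ltm; rewrite -ltnS subn1 prednK.
  by rewrite sum_nat_const leq_mul2r max_card orbT.
have heavyIP : 2 * n * m <= #|star F I| * P by rewrite /P expnS mulnCA leq_mul2l heavyI orbT.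
have := leq_mul (card_star_le F I J) (leqnn P); rewrite mulnDl.
have := leq_mul (card_induced_le_wp F J) (leqnn P); rewrite cardJ.
have : n <= n * m by rewrite leq_pmulr.
rewrite mulnBr muln1 in outsideP; lia.
Qed.

Lemma card_heavy_tuples (k : nat) : k <= s -> i ^ k <= #|heavy_tuples F k|.
Proof.
elim: k => [|k IHk] le_k_s.
  rewrite (_ : heavy_tuples F 0 = setT) ?cardsT ?card_tuple //.
  apply/setP => t; rewrite !inE tuple0 /heavy muln1 subset_leq_card //.
  by apply/subsetP => e eF; rewrite inE eF; apply/subsetP => x; rewrite inE.
rewrite expnS; apply: leq_trans (leq_mul (leqnn i) (IHk (ltnW le_k_s))) _.
apply: card_cons_extensions => t; rewrite inE => heavy_t.
apply: leq_trans (many_heavy_extensions le_k_s heavy_t) _.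
by apply: subset_leq_card; apply/subsetP => v; rewrite !inE set_cons.
Qed.

End Extension.

Theorem lemma2p3 (T : finType) (F : {set {set T}}) (s i : nat) :
  0 < s -> 0 < i -> i < #|T| ->
  wp F i * (2 ^ s * #|T| ^ (s - 1)) <= #|F| ->
  i ^ s <= #|[set U : s.-tuple T | #|F| <= #|tlink F U| * (2 * #|T|) ^ s]|.
Proof.
move=> _ _ lt_i_T wp_small.
apply: leq_trans (card_heavy_tuples lt_i_T wp_small (leqnn s)) _.
by apply: subset_leq_card; apply/subsetP => U; rewrite !inE /tlink card_link.
Qed.
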